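(* Let $C$ and $C'$ be Clifford systems on $\mathbb{R}^{2l}$ and $\mathbb{R}^{2l'}$ respectively, each satisfying ($l>m+1$ or $l=m\ge2$) for its own rank. If $C$ and $C'$ are not geometrically equivalent, then there is no isometry $\mathbb{S}^{2l-1}\to\mathbb{S}^{2l'-1}$ mapping the leaves of $\mathcal{F}_C$ onto the leaves of $\mathcal{F}_{C'}$.
   Context: A Clifford system $C$ of rank $m+1$ ($m\ge1$) on $\mathbb{R}^{2l}$, with the standard inner product, is an $(m+1)$-dimensional linear subspace $\mathbb{R}_C$ of the symmetric endomorphisms of $\mathbb{R}^{2l}$. It must admit a basis $P_0,\dots,P_m$ with $P_i^2=\mathrm{Id}$ and $P_iP_j=-P_jP_i$ for $i\ne j$. The map $\pi_C$ is $\pi_C(x)=\sum_i\langle P_ix,x\rangle P_i$ on $\mathbb{S}^{2l-1}$, and $\mathcal{F}_C$ is the partition of $\mathbb{S}^{2l-1}$ into fibers of $\pi_C$. Clifford systems $C,C'$ on the same $\mathbb{R}^{2l}$ are geometrically equivalent if $\mathbb{R}_{C'}=A^{-1}\mathbb{R}_CA$ for some $A\in O(2l)$; systems on spaces of different dimensions are never geometrically equivalent. *)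

From HB Require Import structures.
From mathcomp Require Import all_boot all_order all_algebra.
Set Implicit Arguments. Unset Strict Implicit. Unset Printing Implicit Defensive.
Import Order.TTheory GRing.Theory Num.Theory.
Local Open Scope ring_scope.

Section CliffordDefs.
Variable R : rcfType.

Definition dotv (n : nat) (x y : 'rV[R]_n) : R := (x *m y^T) 0 0.

Definition on_sphere (n : nat) (x : 'rV[R]_n) : Prop := dotv x x = 1.

(* A Clifford system of rank m+1 on R^n, given by an admissible basis
   P_0,...,P_m of symmetric endomorphisms with P_i^2 = Id and
   P_i P_j = - P_j P_i for i <> j. *)
Definition is_clifford_basis (n m : nat) (P : 'I_m.+1 -> 'M[R]_n) : Prop :=
  [/\ forall i, (P i)^T = P i,
      forall i, P i *m P i = 1%:M
    & forall i j, i != j -> P i *m P j = - (P j *m P i)].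

(* the linear subspace R_C spanned by the P_i, encoded (mxalgebra style)
   as the row space of the matrix whose rows are the vectorized P_i *)
Definition cliff_space (n m : nat) (P : 'I_m.+1 -> 'M[R]_n) : 'M[R]_(m.+1, n * n) :=
  \matrix_(i < m.+1) mxvec (P i).

Definition cliff_pi (n m : nat) (P : 'I_m.+1 -> 'M[R]_n) (x : 'rV[R]_n) : 'M[R]_n :=
  \sum_(i < m.+1) dotv (x *m P i) x *: P i.

Definition orthogonal_mx (n : nat) (A : 'M[R]_n) : Prop := A *m A^T = 1%:M.

(* geometric equivalence: same ambient space R^{2l} (l = l') and
   R_{C'} = A^{-1} R_C A for some A in O(2l).  Systems on spaces of
   different dimensions are never geometrically equivalent. *)
Definition geom_equiv (l m l' m' : nat)
    (P : 'I_m.+1 -> 'M[R]_(l.*2)) (P' : 'I_m'.+1 -> 'M[R]_(l'.*2)) : Prop :=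
  exists E : l.*2 = l'.*2,
  exists2 A : 'M[R]_(l'.*2), orthogonal_mx A &
    (cliff_space P' ==
     cliff_space (fun i => invmx A *m castmx (E, E) (P i) *m A))%MS.

(* isometry between unit spheres (for the Euclidean chordal distance, which
   has the same isometries as the intrinsic distance) *)
Definition sphere_isometry (n n' : nat) (f : 'rV[R]_n -> 'rV[R]_n') : Prop :=
  [/\ forall x, on_sphere x -> on_sphere (f x),
      forall x y, on_sphere x -> on_sphere y ->
        dotv (f x - f y) (f x - f y) = dotv (x - y) (x - y)
    & forall z, on_sphere z -> exists2 x, on_sphere x & f x = z].

(* f maps each leaf of F_C (fiber of pi_C through x) onto a leaf of F_C'
   (namely the fiber of pi_C' through f x). *)
Definition maps_leaves_onto (n m n' m' : nat)
    (P : 'I_m.+1 -> 'M[R]_n) (P' : 'I_m'.+1 -> 'M[R]_n')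
    (f : 'rV[R]_n -> 'rV[R]_n') : Prop :=
  forall x, on_sphere x ->
    forall z, (on_sphere z /\ cliff_pi P' z = cliff_pi P' (f x)) <->
              (exists2 y, (on_sphere y /\ cliff_pi P y = cliff_pi P x) & f y = z).

End CliffordDefs.

(* An isometry between unit spheres is the restriction of an
   orthogonal matrix A, so both systems live on the same R^{2l}, and
   conjugating C' by A gives a Clifford system Q with exactly the same
   fibres as P on the unit sphere ("same_fibers").  The heart of the proof
   (span_of_same_fibers) shows that, when l <> k + 1 for the rank k + 1 of
   Q, every P_i is a linear combination of the Q_j.  Fix a unit vector x0
   in the +1-eigenspace E_+ of P_i and let c = pi_Q(x0), s = |c|^2 in
   [0, 1].  Since E_+ is a fibre of pi_P, pi_Q is determined on E_+ by c;
   polarizing gives <x Q_j, w> = <x, w> c_j on E_+.  If s = 1 then P_i and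
   Q_c = sum_j c_j Q_j are symmetric involutions with the same fixed space,
   hence equal; 0 < s < 1 is impossible by evaluating the polarized identity
   at x0 Q_c; and s = 0 forces the orthonormal vectors x0 Q_j into the
   l-dimensional space E_-, whence a dimension count and l <> k + 1 produce
   a vector which is fixed and negated by P_i at once.  Applying this in
   both directions gives R_P = R_Q = A R_{C'} A^T, i.e. geometric
   equivalence, which contradicts the hypothesis. *)

From HB Require Import structures.
From mathcomp Require Import all_boot all_order all_algebra.
From mathcomp Require Import ring lra zify.
Set Implicit Arguments. Unset Strict Implicit. Unset Printing Implicit Defensive.
Import Order.TTheory GRing.Theory Num.Theory.
Local Open Scope ring_scope.

Section InnerProduct.
Variable R : rcfType.
Variable n : nat.
Implicit Types x y z : 'rV[R]_n.

Lemma dotvE x y : dotv x y = \sum_k x 0 k * y 0 k.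
Proof. by rewrite /dotv mxE; apply: eq_bigr => k _; rewrite mxE. Qed.

Lemma dotvC x y : dotv x y = dotv y x.
Proof. by rewrite !dotvE; apply: eq_bigr => k _; rewrite mulrC. Qed.

Lemma dotvDl x y z : dotv (x + y) z = dotv x z + dotv y z.
Proof. by rewrite /dotv mulmxDl mxE. Qed.

Lemma dotvZl a x y : dotv (a *: x) y = a * dotv x y.
Proof. by rewrite /dotv -scalemxAl mxE. Qed.

Lemma dotvNl x y : dotv (- x) y = - dotv x y.
Proof. by rewrite -scaleN1r dotvZl mulN1r. Qed.

Lemma dotvBl x y z : dotv (x - y) z = dotv x z - dotv y z.
Proof. by rewrite dotvDl dotvNl. Qed.

Lemma dotvDr x y z : dotv z (x + y) = dotv z x + dotv z y.
Proof. by rewrite dotvC dotvDl !(dotvC z). Qed.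

Lemma dotvZr a x y : dotv y (a *: x) = a * dotv y x.
Proof. by rewrite dotvC dotvZl dotvC. Qed.

Lemma dotvNr x y : dotv y (- x) = - dotv y x.
Proof. by rewrite dotvC dotvNl dotvC. Qed.

Lemma dotvBr x y z : dotv z (x - y) = dotv z x - dotv z y.
Proof. by rewrite dotvDr dotvNr. Qed.

Lemma dotv0l x : dotv 0 x = 0.
Proof. by rewrite -(scale0r 0) dotvZl mul0r. Qed.

Lemma dotvMl x y (M : 'M[R]_n) : dotv (x *m M) y = dotv x (y *m M^T).
Proof. by rewrite /dotv trmx_mul trmxK mulmxA. Qed.

Lemma dotvMr x y (M : 'M[R]_n) : dotv x (y *m M) = dotv (x *m M^T) y.
Proof. by rewrite dotvMl trmxK. Qed.

Lemma dotv_suml I (r : seq I) (F : I -> 'rV[R]_n) y :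
  dotv (\sum_(i <- r) F i) y = \sum_(i <- r) dotv (F i) y.
Proof. by rewrite /dotv mulmx_suml summxE. Qed.

Lemma dotv_ge0 x : 0 <= dotv x x.
Proof. by rewrite dotvE sumr_ge0 // => k _; rewrite -expr2 sqr_ge0. Qed.

Lemma dotv_eq0 x : dotv x x = 0 -> x = 0.
Proof.
rewrite dotvE => sum0; apply/rowP => k; rewrite mxE.
have sq_ge0 i : predT i -> 0 <= x 0 i * x 0 i by rewrite -expr2 sqr_ge0.
by have /eqP := @psumr_eq0P _ _ _ _ sq_ge0 sum0 k isT; rewrite mulf_eq0 orbb => /eqP.
Qed.

Lemma normalize x : x != 0 ->
  exists r, exists2 y, 0 < r /\ dotv y y = 1 & x = r *: y.
Proof.
move=> x0; have hx : 0 < dotv x x.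
  by rewrite lt_def dotv_ge0 andbT; apply: contra x0 => /eqP/dotv_eq0->.
set r := Num.sqrt (dotv x x).
have r0 : 0 < r by rewrite sqrtr_gt0.
have r2 : r ^+ 2 = dotv x x by rewrite sqr_sqrtr // ltW.
exists r; exists (r^-1 *: x); last by rewrite scalerA divff ?scale1r // gt_eqF.
split => //; rewrite dotvZl dotvZr -r2 mulrA -expr2 exprVn mulVf //.
by rewrite expf_eq0 /= gt_eqF.
Qed.

Lemma eigen_pm_orth (S : 'M[R]_n) x y :
  S^T = S -> x *m S = x -> y *m S = - y -> dotv x y = 0.
Proof.
move=> Ssym Sx Sy.
have : dotv x y = - dotv x y by rewrite -{1}Sx dotvMl Ssym Sy dotvNr.
by lra.
Qed.

Lemma eigenN_of_orth (S : 'M[R]_n) u : S^T = S -> S *m S = 1%:M ->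
  (forall w, w *m S = w -> dotv u w = 0) -> u *m S = - u.
Proof.
move=> Ssym S2 u_orth; set w := u + u *m S.
have Sw : w *m S = w by rewrite /w mulmxDl -mulmxA S2 mulmx1 addrC.
have : dotv w w = 0 by rewrite {1}/w dotvDl u_orth // dotvMl Ssym Sw u_orth //; lra.
by move/dotv_eq0/eqP; rewrite /w addrC addr_eq0 => /eqP.
Qed.

Lemma mulrn2_inj p q (A B : 'M[R]_(p, q)) : A *+ 2 = B *+ 2 -> A = B.
Proof.
move=> /matrixP AB; apply/matrixP => i j; have := AB i j; rewrite !mulmxnE.
exact: (@pmulrnI _ 2).
Qed.

(* Two symmetric involutions with the same fixed space are equal: both act
   as -1 on its orthogonal complement. *)
Lemma sym_invol_eq (S T : 'M[R]_n) :
  S^T = S -> S *m S = 1%:M -> T^T = T -> T *m T = 1%:M ->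
  (forall x, x *m S = x <-> x *m T = x) -> S = T.
Proof.
move=> Ssym S2 Tsym T2 fixST.
suff ST x : x *m S = x *m T by apply/row_matrixP => i; rewrite !rowE ST.
set u := x + x *m S; set w := x - x *m S.
have Su : u *m S = u by rewrite /u mulmxDl -mulmxA S2 mulmx1 addrC.
have Sw : w *m S = - w by rewrite /w mulmxBl -mulmxA S2 mulmx1 opprB.
have Tu : u *m T = u by apply/fixST.
have Tw : w *m T = - w.
  by apply: eigenN_of_orth => // v /fixST Sv; rewrite dotvC (eigen_pm_orth _ Sv Sw).
have x2 : x *+ 2 = u + w by rewrite /u /w addrACA subrr addr0 mulr2n.
have xS2 : (x *m S) *+ 2 = u - w by rewrite /u /w opprB addrC addrA addrNK mulr2n.
by apply: mulrn2_inj; rewrite xS2 mulr2n -mulmxDl -mulr2n x2 mulmxDl Tu Tw.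
Qed.

End InnerProduct.

Definition quad (R : rcfType) n (M : 'M[R]_n) (x : 'rV[R]_n) : R := dotv (x *m M) x.

(* A fibre of pi_C is determined by all its quadratic forms, whence the
   notion of two systems defining the same foliation of the unit sphere. *)
Definition same_fibers (R : rcfType) n m k
    (P : 'I_m.+1 -> 'M[R]_n) (Q : 'I_k.+1 -> 'M[R]_n) : Prop :=
  forall x y, dotv x x = 1 -> dotv y y = 1 ->
    (forall i, quad (P i) x = quad (P i) y) <-> (forall j, quad (Q j) x = quad (Q j) y).

Definition cliff_comb (R : rcfType) n m (P : 'I_m.+1 -> 'M[R]_n) (a : 'I_m.+1 -> R) :
  'M[R]_n := \sum_i a i *: P i.

Lemma sumsq_eq0 (R : rcfType) (I : finType) (d : I -> R) :
  \sum_i d i ^+ 2 = 0 -> forall i, d i = 0.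
Proof.
move=> sum0 i; have sq_ge0 k : predT k -> 0 <= d k ^+ 2 by rewrite sqr_ge0.
by have /eqP := @psumr_eq0P _ _ _ _ sq_ge0 sum0 i isT; rewrite sqrf_eq0 => /eqP.
Qed.

Lemma quadZ (R : rcfType) n (M : 'M[R]_n) r x : quad M (r *: x) = r ^+ 2 * quad M x.
Proof. by rewrite /quad -scalemxAl dotvZl dotvZr mulrA expr2. Qed.

Lemma quadD (R : rcfType) n (M : 'M[R]_n) x w : M^T = M ->
  quad M (x + w) = quad M x + quad M w + 2 * dotv (x *m M) w.
Proof.
move=> Msym; rewrite /quad mulmxDl !dotvDl !dotvDr.
have -> : dotv (w *m M) x = dotv (x *m M) w by rewrite dotvMl Msym dotvC.
by rewrite mulr2n mulrDl mul1r; ring.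
Qed.

Section CliffordSystem.
Variable R : rcfType.
Variables n m : nat.
Variable P : 'I_m.+1 -> 'M[R]_n.
Hypothesis HP : is_clifford_basis P.

Local Notation comb := (cliff_comb P).

Lemma cliff_sym i : (P i)^T = P i. Proof. by case: HP. Qed.
Lemma cliff_sq i : P i *m P i = 1%:M. Proof. by case: HP. Qed.
Lemma cliff_anti i j : i != j -> P i *m P j = - (P j *m P i).
Proof. by case: HP => _ _; apply. Qed.

Lemma cliff_anticomm i j : P i *m P j + P j *m P i = ((i == j)%:R *+ 2)%:M.
Proof.
have [->|ij] := eqVneq i j; first by rewrite cliff_sq raddfMn mulr2n.
by rewrite cliff_anti // addNr /= raddfMn raddf0 mul0rn.
Qed.

Lemma cliff_comb_sym a : (comb a)^T = comb a.
Proof.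
apply/matrixP => i j; rewrite !mxE !summxE; apply: eq_bigr => k _.
by rewrite !mxE -[in RHS]cliff_sym mxE.
Qed.

Lemma cliff_comb_anticomm a j : P j *m comb a + comb a *m P j = (a j *+ 2)%:M.
Proof.
rewrite /cliff_comb mulmx_sumr mulmx_suml -big_split /=.
rewrite (eq_bigr (fun i => ((a i * (i == j)%:R) *+ 2)%:M)); last first.
  move=> i _; rewrite -scalemxAr -scalemxAl -scalerDr addrC cliff_anticomm.
  by rewrite -scalemx1 scalerA scalemx1 mulrnAr.
rewrite -raddf_sum sumrMnl (bigD1 j) //= eqxx mulr1 big1 ?addr0 //.
by move=> i /negbTE ->; rewrite mulr0.
Qed.

Lemma cliff_comb_sq a : comb a *m comb a = (\sum_i a i ^+ 2)%:M.
Proof.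
apply: mulrn2_inj; rewrite mulr2n.
have -> : comb a *m comb a + comb a *m comb a =
          \sum_i a i *: (P i *m comb a + comb a *m P i).
  have expl : comb a *m comb a = \sum_i a i *: (P i *m comb a).
    by rewrite {1}/cliff_comb mulmx_suml; apply: eq_bigr => i _; rewrite scalemxAl.
  have expr : comb a *m comb a = \sum_i a i *: (comb a *m P i).
    by rewrite {2}/cliff_comb mulmx_sumr; apply: eq_bigr => i _; rewrite scalemxAr.
  by rewrite {1}expl expr -big_split /=; apply: eq_bigr => i _; rewrite scalerDr.
rewrite (eq_bigr (fun i => ((a i ^+ 2) *+ 2)%:M)); last first.
  by move=> i _; rewrite cliff_comb_anticomm -mul_scalar_mx -scalar_mxM mulrnAr expr2.
by rewrite -raddf_sum sumrMnl raddfMn.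
Qed.

(* Since (sum_i d_i P_i)^2 = |d|^2 Id, the P_i are linearly independent:
   coefficients can be read off a combination. *)
Lemma cliff_comb_inj (n0 : (0 < n)%N) a b : comb a = comb b -> forall i, a i = b i.
Proof.
move=> ab i; set d := fun i => a i - b i.
have d0 : comb d = 0.
  rewrite /cliff_comb (eq_bigr (fun k => a k *: P k - b k *: P k)); last first.
    by move=> k _; rewrite scalerBl.
  by rewrite sumrB -/(comb a) -/(comb b) ab subrr.
have : comb d *m comb d = 0 by rewrite d0 mul0mx.
rewrite cliff_comb_sq => /matrixP /(_ (Ordinal n0) (Ordinal n0)).
rewrite !mxE eqxx mulr1n => /sumsq_eq0/(_ i)/eqP.
by rewrite subr_eq0 => /eqP.
Qed.

Lemma quad_comb a x : quad (comb a) x = \sum_i a i * quad (P i) x.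
Proof.
rewrite /quad /cliff_comb mulmx_sumr dotv_suml; apply: eq_bigr => i _.
by rewrite -scalemxAr dotvZl.
Qed.

Lemma cliff_pi_eqE (n0 : (0 < n)%N) x y :
  cliff_pi P x = cliff_pi P y <-> forall i, quad (P i) x = quad (P i) y.
Proof.
split; first exact: cliff_comb_inj.
by move=> qxy; rewrite /cliff_pi; apply: eq_bigr => i _; have := qxy i; rewrite /quad => ->.
Qed.

Lemma dotv_comb a y :
  dotv (y *m comb a) (y *m comb a) = (\sum_i a i ^+ 2) * dotv y y.
Proof. by rewrite dotvMl cliff_comb_sym -mulmxA cliff_comb_sq mul_mx_scalar dotvZr. Qed.

Lemma dotv_cliff a b x : dotv (x *m P a) (x *m P b) = (a == b)%:R * dotv x x.
Proof.
rewrite dotvMr cliff_sym -mulmxA; have [<-|ab] := eqVneq a b.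
  by rewrite cliff_sq mulmx1 mul1r.
set t := dotv _ _; have : t = - t.
  rewrite {1}/t dotvMl trmx_mul !cliff_sym dotvC (@cliff_anti b a) 1?eq_sym //.
  by rewrite mulmxN dotvNl.
by rewrite mul0r; lra.
Qed.

(* |pi_C(y)| <= 1 on the unit sphere: Cauchy-Schwarz for y and y P_d, where
   d = pi_C(y). *)
Lemma sum_quad_sq_le1 y : dotv y y = 1 -> \sum_i quad (P i) y ^+ 2 <= 1.
Proof.
move=> ny; set d := fun i => quad (P i) y; set s := \sum_i _.
have yd_y : dotv (y *m comb d) y = s.
  by rewrite -/(quad _ _) quad_comb; apply: eq_bigr => i _; rewrite expr2.
have yd_yd := dotv_comb d y; rewrite ny mulr1 -/s in yd_yd.
have := dotv_ge0 (y *m comb d - s *: y).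
rewrite !dotvBl !dotvBr !dotvZl !dotvZr yd_y yd_yd ny dotvC yd_y => ge0.
have s0 : 0 <= s by rewrite /s sumr_ge0 // => i _; rewrite sqr_ge0.
by nra.
Qed.

Lemma eigen_quad i eps x : eps != 0 -> x *m P i = eps *: x ->
  forall j, quad (P j) x = if i == j then eps * dotv x x else 0.
Proof.
move=> eps0 xPi j; have [<-|ij] := eqVneq i j; first by rewrite /quad xPi dotvZl.
have via_eigen : dotv (x *m P j) (x *m P i) = eps * quad (P j) x by rewrite xPi dotvZr.
have via_anti : dotv (x *m P j) (x *m P i) = - (eps * quad (P j) x).
  rewrite dotvMr cliff_sym -mulmxA (@cliff_anti j i) 1?eq_sym //.
  by rewrite mulmxN mulmxA xPi -scalemxAl dotvNl dotvZl.
have : eps * quad (P j) x = 0 by lra.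
by move/eqP; rewrite mulf_eq0 (negbTE eps0) => /eqP.
Qed.

Lemma eigen_same_fiber i eps x y : eps != 0 ->
  x *m P i = eps *: x -> y *m P i = eps *: y -> dotv x x = 1 -> dotv y y = 1 ->
  forall j, quad (P j) x = quad (P j) y.
Proof.
by move=> eps0 xPi yPi nx ny j; rewrite (eigen_quad eps0 xPi) (eigen_quad eps0 yPi) nx ny.
Qed.

(* P_a P_j P_a and P_c P_j P_c (P_c a combination), rewritten with the
   anticommutation rules; they compute quad (P j) at x P_a and x P_c. *)
Lemma cliff_sandwich a j : P a *m P j *m P a = ((a == j)%:R *+ 2) *: P a - P j.
Proof.
have -> : P a *m P j = ((a == j)%:R *+ 2)%:M - P j *m P a by rewrite -cliff_anticomm addrK.
by rewrite mulmxBl mul_scalar_mx -mulmxA cliff_sq mulmx1.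
Qed.

Lemma cliff_comb_sandwich a j :
  comb a *m P j *m comb a = (a j *+ 2) *: comb a - (\sum_i a i ^+ 2) *: P j.
Proof.
have -> : comb a *m P j = (a j *+ 2)%:M - P j *m comb a.
  by rewrite -(cliff_comb_anticomm a j) (addrC (P j *m comb a)) addrK.
by rewrite mulmxBl mul_scalar_mx -mulmxA cliff_comb_sq mul_mx_scalar.
Qed.

End CliffordSystem.

(* The eigenspaces E_+ and E_- of a basis element P_i are exchanged by any
   other P_i', hence both have dimension l; they are the row spaces of
   1 + P_i and 1 - P_i. *)
Section Eigenspaces.
Variable R : rcfType.
Variables l m : nat.
Variable P : 'I_m.+1 -> 'M[R]_(l.*2).
Hypothesis HP : is_clifford_basis P.
Hypothesis m0 : (0 < m)%N.
Variable i : 'I_m.+1.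

Lemma exists_other_index : exists i' : 'I_m.+1, i' != i.
Proof.
have [->|i0] := eqVneq i ord0; last by exists ord0; rewrite eq_sym.
by exists (inord 1); rewrite -val_eqE /= inordK.
Qed.

Definition posspace : 'M[R]_(l.*2) := 1%:M + P i.
Definition negspace : 'M[R]_(l.*2) := 1%:M - P i.

Lemma posspace_fixed p (A : 'M[R]_(p, l.*2)) : (A <= posspace)%MS -> A *m P i = A.
Proof.
move/submxP => [D ->]; rewrite -mulmxA /posspace mulmxDl mul1mx (cliff_sq HP).
by rewrite addrC.
Qed.

Lemma negspace_negated p (A : 'M[R]_(p, l.*2)) : (A <= negspace)%MS -> A *m P i = - A.
Proof.
move/submxP => [D ->]; rewrite -mulmxA /negspace mulmxBl mul1mx (cliff_sq HP).
by rewrite -opprB mulmxN.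
Qed.

Lemma negspaceP (u : 'rV[R]_(l.*2)) : u *m P i = - u -> (u <= negspace)%MS.
Proof.
move=> uPi; have -> : u = ((2 : R)^-1 *: u) *m negspace.
  rewrite -scalemxAl /negspace mulmxBr mulmx1 uPi opprK -mulr2n -scaler_nat scalerA.
  by rewrite mulVf ?scale1r // pnatr_eq0.
exact: submxMl.
Qed.

(* P_i' swaps E_+ and E_-, which are complementary, so both have dimension
   l (half of 2l). *)
Lemma rank_negspace : \rank negspace = l.
Proof.
have [i' i'i] := exists_other_index.
have i'_free : row_free (P i').
  by rewrite row_free_unit; case: (mulmx1_unit (cliff_sq HP i')).
have swap_pn : posspace *m P i' = P i' *m negspace.
  by rewrite mulmxDl mulmxBr mul1mx mulmx1 (@cliff_anti _ _ _ _ HP i i') 1?eq_sym // opprK.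
have swap_np : negspace *m P i' = P i' *m posspace.
  by rewrite mulmxBl mulmxDr mul1mx mulmx1 (@cliff_anti _ _ _ _ HP i i') 1?eq_sym // opprK.
have rank_eq : \rank posspace = \rank negspace.
  apply/eqP; rewrite eqn_leq; apply/andP; split.
    by rewrite -(mxrankMfree _ i'_free) swap_pn mxrankM_maxr.
  by rewrite -(mxrankMfree _ i'_free) swap_np mxrankM_maxr.
have cap0 : (posspace :&: negspace)%MS = 0.
  apply: mulrn2_inj; rewrite mul0rn mulr2n.
  by rewrite -{2}(posspace_fixed (capmxSl _ _)) (negspace_negated (capmxSr _ _)) subrr.
have full : \rank (posspace + negspace)%MS = l.*2.
  have sum_full : \rank (posspace + negspace)%R = l.*2.
    rewrite /posspace /negspace addrACA subrr addr0 -mulr2n -scaler_nat.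
    by rewrite mxrank_scale_nz ?mxrank1 // pnatr_eq0.
  apply/eqP; rewrite eqn_leq rank_leq_col /= -{1}sum_full.
  exact/mxrankS/addmx_sub_adds.
have := mxrank_sum_cap posspace negspace.
by rewrite cap0 mxrank0 addn0 full rank_eq addnn => /double_inj.
Qed.

Lemma fixed_of_quad1 y : dotv y y = 1 -> quad (P i) y = 1 -> y *m P i = y.
Proof.
move=> ny qy; apply/eqP; rewrite -subr_eq0; apply/eqP/dotv_eq0.
have nyP : dotv (y *m P i) (y *m P i) = 1.
  by rewrite dotvMr (cliff_sym HP) -mulmxA (cliff_sq HP) mulmx1.
by rewrite !dotvBl !dotvBr nyP [dotv y (y *m P i)]dotvC -/(quad _ _) qy ny; lra.
Qed.

(* E_+ is nonzero: if e is not negated by P i then e + e P_i is fixed,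
   otherwise e P_i' is fixed. *)
Lemma exists_unit_fixed : (0 < l)%N ->
  exists x0 : 'rV[R]_(l.*2), dotv x0 x0 = 1 /\ x0 *m P i = x0.
Proof.
move=> l0; suff [u u0 uPi] : exists2 u : 'rV[R]_(l.*2), u != 0 & u *m P i = u.
  have [r [y [r0 ny] uy]] := normalize u0; exists y; split => //.
  by apply: (@scalerI _ _ r); rewrite ?gt_eqF // scalemxAl -uy.
have n0 : (0 < l.*2)%N by rewrite double_gt0.
set e : 'rV[R]_(l.*2) := delta_mx 0 (Ordinal n0).
have e0 : e != 0.
  by apply/eqP => /matrixP /(_ 0 (Ordinal n0)); rewrite !mxE !eqxx => /eqP; rewrite oner_eq0.
have [sum0|sum_neq0] := eqVneq (e + e *m P i) 0; last first.
  by exists (e + e *m P i); rewrite // mulmxDl -mulmxA (cliff_sq HP) mulmx1 addrC.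
have eN : e *m P i = - e by apply/eqP; rewrite -addr_eq0 addrC sum0.
have [i' i'i] := exists_other_index.
exists (e *m P i').
  apply: contra e0 => /eqP eP0.
  by rewrite -[e]mulmx1 -(cliff_sq HP i') mulmxA eP0 mul0mx.
by rewrite -mulmxA (cliff_anti HP i'i) mulmxN mulmxA eN mulNmx opprK.
Qed.

End Eigenspaces.

Section SameFibers.
Variable R : rcfType.
Variables l m k : nat.
Variable P : 'I_m.+1 -> 'M[R]_(l.*2).
Variable Q : 'I_k.+1 -> 'M[R]_(l.*2).
Hypothesis HP : is_clifford_basis P.
Hypothesis HQ : is_clifford_basis Q.
Hypothesis fibers_PQ : same_fibers P Q.
Hypothesis m0 : (0 < m)%N.
Variable i : 'I_m.+1.
Variable x0 : 'rV[R]_(l.*2).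
Hypothesis x0_unit : dotv x0 x0 = 1.
Hypothesis x0_fixed : x0 *m P i = x0.

Definition coef (j : 'I_k.+1) : R := quad (Q j) x0.
Definition coef_norm : R := \sum_j coef j ^+ 2.
Definition Qcoef : 'M[R]_(l.*2) := cliff_comb Q coef.

Let x0_eigen : x0 *m P i = 1 *: x0. Proof. by rewrite scale1r. Qed.

(* The unit sphere of E_+ is a single fibre of pi_P, hence of pi_Q. *)
Lemma fixed_quadQ y : dotv y y = 1 -> y *m P i = y -> forall j, quad (Q j) y = coef j.
Proof.
move=> ny yPi; apply/(fibers_PQ ny x0_unit).
have y_eigen : y *m P i = 1 *: y by rewrite scale1r.
exact: (eigen_same_fiber HP (oner_neq0 R) y_eigen x0_eigen).
Qed.

Lemma fixed_quadQ_hom x : x *m P i = x -> forall j, quad (Q j) x = dotv x x * coef j.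
Proof.
move=> xPi j; have [->|x_neq0] := eqVneq x 0; first by rewrite /quad mul0mx !dotv0l mul0r.
have [r [z [r0 nz] xz]] := normalize x_neq0.
have zPi : z *m P i = z by apply: (@scalerI _ _ r); rewrite ?gt_eqF // scalemxAl -xz.
by rewrite xz quadZ dotvZl dotvZr nz (fixed_quadQ nz zPi); ring.
Qed.

(* Conversely, a vector on which pi_Q takes the value |y|^2 c lies in E_+,
   because P_i attains its maximum on the fibre of x0. *)
Lemma fixed_of_quadQ y : y != 0 ->
  (forall j, quad (Q j) y = dotv y y * coef j) -> y *m P i = y.
Proof.
move=> y_neq0 qy; have [r [z [r0 nz] yz]] := normalize y_neq0.
have r2 : r ^+ 2 != 0 by rewrite expf_eq0 gt_eqF.
have qz j : quad (Q j) z = quad (Q j) x0.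
  apply: (mulfI r2); have := qy j.
  by rewrite yz quadZ dotvZl dotvZr nz mulr1 => ->; rewrite /coef; ring.
have qPz := (fibers_PQ nz x0_unit).2 qz i.
have zPi : z *m P i = z.
  by apply: (fixed_of_quad1 HP nz); rewrite qPz /quad x0_fixed x0_unit.
by rewrite yz -scalemxAl zPi.
Qed.

(* Polarization of fixed_quadQ_hom: on E_+, <x Q_j, w> = <x, w> c_j. *)
Lemma fixed_polarQ x w j : x *m P i = x -> w *m P i = w ->
  dotv (x *m Q j) w = dotv x w * coef j.
Proof.
move=> xPi wPi.
have xwPi : (x + w) *m P i = x + w by rewrite mulmxDl xPi wPi.
have := fixed_quadQ_hom xwPi j.
rewrite (quadD _ _ (cliff_sym HQ j)) (fixed_quadQ_hom xPi) (fixed_quadQ_hom wPi).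
rewrite !dotvDl !dotvDr [dotv w x]dotvC => h.
have : 2 * dotv (x *m Q j) w = 2 * (dotv x w * coef j) by lra.
by apply: mulfI; rewrite pnatr_eq0.
Qed.

Lemma fixed_polarQcoef x w : x *m P i = x -> w *m P i = w ->
  dotv (x *m Qcoef) w = dotv x w * coef_norm.
Proof.
move=> xPi wPi; rewrite /Qcoef /cliff_comb mulmx_sumr dotv_suml /coef_norm mulr_sumr.
by apply: eq_bigr => j _; rewrite -scalemxAr dotvZl (fixed_polarQ _ xPi wPi); ring.
Qed.

Lemma quad_Qcoef_x0 : quad Qcoef x0 = coef_norm.
Proof. by rewrite quad_comb; apply: eq_bigr => j _; rewrite expr2. Qed.

(* If |c| = 1, then Q_c is a symmetric involution with the same fixed space
   as P_i, so P_i = Q_c. *)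
Lemma P_eq_Qcoef : coef_norm = 1 -> P i = Qcoef.
Proof.
move=> s1; apply: sym_invol_eq.
- exact: (cliff_sym HP).
- exact: (cliff_sq HP).
- exact: (cliff_comb_sym HQ).
- by rewrite (cliff_comb_sq HQ) -/coef_norm s1.
move=> x; split => [xPi | xQc].
  apply/eqP; rewrite -subr_eq0; apply/eqP/dotv_eq0.
  rewrite !dotvBl !dotvBr (dotv_comb HQ) -/coef_norm (fixed_polarQcoef xPi xPi).
  by rewrite [dotv x (x *m Qcoef)]dotvC (fixed_polarQcoef xPi xPi) s1; lra.
have [->|x_neq0] := eqVneq x 0; first by rewrite mul0mx.
apply: fixed_of_quadQ => //.
have [r [z [r0 nz] xz]] := normalize x_neq0.
have zQc : z *m Qcoef = z by apply: (@scalerI _ _ r); rewrite ?gt_eqF // scalemxAl -xz.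
set d := fun j => quad (Q j) z.
have d_le1 := sum_quad_sq_le1 HQ nz; rewrite -/d in d_le1.
have cd1 : \sum_j coef j * d j = 1 by rewrite -quad_comb -/Qcoef /quad zQc nz.
have : \sum_j (d j - coef j) ^+ 2 = 0.
  have expand : \sum_j (d j - coef j) ^+ 2 =
                \sum_j d j ^+ 2 - (\sum_j coef j * d j) *+ 2 + coef_norm.
    by rewrite -sumrMnl -sumrB -big_split /=; apply: eq_bigr => j _; ring.
  apply/eqP; rewrite eq_le sumr_ge0 ?andbT => [|j _]; last by rewrite sqr_ge0.
  by rewrite expand cd1 s1; lra.
move/sumsq_eq0 => dc j; have /eqP : d j - coef j = 0 by [].
rewrite subr_eq0 /d => /eqP dcj; rewrite xz quadZ dcj dotvZl dotvZr nz; ring.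
Qed.

(* |c|^2 is 0 or 1: the vector y = x0 Q_c has pi_Q(y) = |y|^2 c, so it lies
   in E_+, and the polarized identity at (x0, y - |c|^2 x0) forces
   |c|^2 (1 - |c|^2) = 0. *)
Lemma coef_norm_0_or_1 : coef_norm = 0 \/ coef_norm = 1.
Proof.
have [s0|s_neq0] := eqVneq coef_norm 0; [by left | right].
set y := x0 *m Qcoef.
have qy j : quad (Q j) y = coef_norm * coef j.
  rewrite /quad /y dotvMr (cliff_comb_sym HQ) -!mulmxA (mulmxA Qcoef).
  rewrite (cliff_comb_sandwich HQ) mulmxBr -!scalemxAr dotvBl !dotvZl.
  by rewrite [dotv (x0 *m Qcoef) x0]quad_Qcoef_x0 -/(quad (Q j) x0) -/(coef j) -/coef_norm; ring.
have yy : dotv y y = coef_norm by rewrite /y (dotv_comb HQ) x0_unit mulr1.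
have y_neq0 : y != 0 by apply: contra s_neq0 => /eqP y0; rewrite -yy y0 dotv0l.
have yPi : y *m P i = y by apply: fixed_of_quadQ => // j; rewrite qy yy.
have wPi : (y - coef_norm *: x0) *m P i = y - coef_norm *: x0.
  by rewrite mulmxBl -scalemxAl yPi x0_fixed.
have := fixed_polarQcoef x0_fixed wPi.
rewrite -/y !dotvBr !dotvZr yy x0_unit [dotv y x0]dotvC [dotv x0 y]dotvC.
rewrite [dotv y x0]quad_Qcoef_x0 => h.
have : coef_norm * (1 - coef_norm) = 0 by lra.
by move/eqP; rewrite mulf_eq0 (negbTE s_neq0) subr_eq0 => /eqP.
Qed.

(* The case c = 0.  By polarization the vectors x0 Q_j are orthogonal to
   E_+, i.e. they lie in E_-. *)
Lemma coef0_images_neg : coef_norm = 0 -> forall j, x0 *m Q j *m P i = - (x0 *m Q j).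
Proof.
move=> s0 j; have c0 : forall j, coef j = 0 := sumsq_eq0 s0.
apply: (eigenN_of_orth (cliff_sym HP i) (cliff_sq HP i)) => w wPi.
by rewrite (fixed_polarQ _ x0_fixed wPi) c0 mulr0.
Qed.

(* Moreover pi_Q vanishes on E_-: the unit sphere of E_- is the fibre of the
   unit vector x0 Q_0, where pi_Q = 0 by the sandwich identity. *)
Lemma coef0_quad_neg : coef_norm = 0 ->
  forall z, z *m P i = - z -> forall j, quad (Q j) z = 0.
Proof.
move=> s0 z zPi j; have c0 : forall j, coef j = 0 := sumsq_eq0 s0.
have [->|z_neq0] := eqVneq z 0; first by rewrite /quad mul0mx dotv0l.
have [r [z' [r0 nz'] zz']] := normalize z_neq0.
have z'_eigen : z' *m P i = (-1) *: z'.
  apply: (@scalerI _ _ r); rewrite ?gt_eqF //.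
  by rewrite scalemxAl -zz' zPi zz' scaleN1r scalerN.
have u_eigen : x0 *m Q 0 *m P i = (-1) *: (x0 *m Q 0) by rewrite coef0_images_neg // scaleN1r.
have u_unit : dotv (x0 *m Q 0) (x0 *m Q 0) = 1 by rewrite (dotv_cliff HQ) eqxx mul1r x0_unit.
have N1_neq0 : (-1 : R) != 0 by rewrite oppr_eq0 oner_eq0.
have same := eigen_same_fiber HP N1_neq0 z'_eigen u_eigen nz' u_unit.
rewrite zz' quadZ ((fibers_PQ nz' u_unit).1 same j) /quad dotvMr (cliff_sym HQ).
rewrite -!mulmxA (mulmxA (Q 0)) (cliff_sandwich HQ) mulmxBr -scalemxAr dotvBl dotvZl.
by rewrite -/(quad (Q 0) x0) -/(quad (Q j) x0) -/(coef 0) -/(coef j) !c0 mulr0 subrr mulr0.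
Qed.

Definition frame : 'M[R]_(k.+1, l.*2) := \matrix_(a, b) (x0 *m Q a) 0 b.

Lemma row_frame a : row a frame = x0 *m Q a.
Proof. by apply/rowP => b; rewrite !mxE. Qed.

Lemma rank_frame : \rank frame = k.+1.
Proof.
have orthonormal : frame *m frame^T = 1%:M.
  apply/matrixP => a b; rewrite !mxE.
  have := dotv_cliff HQ a b x0; rewrite x0_unit mulr1 dotvE => <-.
  by apply: eq_bigr => t _; rewrite !mxE.
apply/eqP; rewrite eqn_leq rank_leq_row /=.
by rewrite -{1}(mxrank1 R k.+1) -orthonormal mxrankM_maxl.
Qed.

Lemma exists_neg_orth_frame : (k.+1 < l)%N ->
  exists2 z : 'rV[R]_(l.*2),
    z *m P i = - z /\ (forall j, dotv (x0 *m Q j) z = 0) & z != 0.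
Proof.
move=> k_lt_l; set K := kermx frame^T.
have rank_cap : (0 < \rank (negspace P i :&: K))%N.
  have rK : \rank K = (l.*2 - k.+1)%N by rewrite mxrank_ker mxrank_tr rank_frame.
  have := mxrank_sum_cap (negspace P i) K; rewrite rK (rank_negspace HP m0).
  by have := rank_leq_col (negspace P i + K)%MS; lia.
move: rank_cap; rewrite lt0n mxrank_eq0 => /rowV0Pn [z z_cap z_neq0].
exists z => //; split.
  exact/negspace_negated/(submx_trans z_cap)/capmxSl.
move=> j; have /sub_kermxP := submx_trans z_cap (capmxSr _ _).
move=> /matrixP /(_ 0 j); rewrite !mxE => <-.
by rewrite dotvC dotvE; apply: eq_bigr => t _; rewrite !mxE.
Qed.

(* c = 0 is impossible unless l = k + 1: the frame lies in E_-, so k + 1 <= l,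
   and for a vector z as above, x0 + z has pi_Q = 0 and is thus in E_+,
   forcing z to be both fixed and negated by P_i. *)
Lemma coef_norm_neq0 : l != k.+1 -> coef_norm != 0.
Proof.
move=> l_neq; apply/eqP => s0; have c0 : forall j, coef j = 0 := sumsq_eq0 s0.
have frame_neg : (frame <= negspace P i)%MS.
  by apply/row_subP => a; rewrite row_frame negspaceP // coef0_images_neg.
have := mxrankS frame_neg; rewrite rank_frame (rank_negspace HP m0) => k_le_l.
have [z [zPi z_orth] z_neq0] : exists2 z : 'rV[R]_(l.*2),
    z *m P i = - z /\ (forall j, dotv (x0 *m Q j) z = 0) & z != 0.
  by apply: exists_neg_orth_frame; rewrite ltn_neqAle eq_sym l_neq.
have x0z : dotv x0 z = 0 by apply: (eigen_pm_orth (cliff_sym HP i)).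
have y_neq0 : x0 + z != 0.
  apply/eqP => y0; have : dotv (x0 + z) (x0 + z) = 0 by rewrite y0 dotv0l.
  rewrite !dotvDl !dotvDr x0_unit x0z dotvC x0z; have := dotv_ge0 z; lra.
have y_fixed : (x0 + z) *m P i = x0 + z.
  apply: fixed_of_quadQ => // j.
  rewrite (quadD _ _ (cliff_sym HQ j)) (coef0_quad_neg s0 zPi) z_orth.
  by rewrite -/(coef j) c0; ring.
have zfix : z *m P i = z by move: y_fixed; rewrite mulmxDl x0_fixed => /addrI.
by move/eqP: z_neq0; apply; apply/dotv_eq0/(eigen_pm_orth (cliff_sym HP i) zfix zPi).
Qed.

End SameFibers.

Lemma span_of_same_fibers (R : rcfType) (l m k : nat)
    (P : 'I_m.+1 -> 'M[R]_(l.*2)) (Q : 'I_k.+1 -> 'M[R]_(l.*2)) :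
  is_clifford_basis P -> is_clifford_basis Q -> (0 < m)%N -> (0 < l)%N ->
  l != k.+1 -> same_fibers P Q -> forall i, exists c, P i = cliff_comb Q c.
Proof.
move=> HP HQ m0 l0 l_neq fibers i.
have [x0 [x0_unit x0_fixed]] := exists_unit_fixed HP m0 i l0.
have s_neq0 := coef_norm_neq0 HP HQ fibers m0 x0_unit x0_fixed l_neq.
case: (coef_norm_0_or_1 HP HQ fibers x0_unit x0_fixed) => [s0 | s1].
  by rewrite s0 eqxx in s_neq0.
by exists (coef Q x0); apply: (P_eq_Qcoef HP HQ fibers x0_unit x0_fixed s1).
Qed.

Lemma same_fibers_sym (R : rcfType) n m k
    (P : 'I_m.+1 -> 'M[R]_n) (Q : 'I_k.+1 -> 'M[R]_n) :
  same_fibers P Q -> same_fibers Q P.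
Proof. by move=> fibers x y nx ny; apply: iff_sym; apply: fibers. Qed.

(* An isometry between unit spheres is the restriction of a linear map whose
   matrix A (with rows the images of the basis vectors) satisfies
   A A^T = 1; surjectivity forces the two dimensions to agree. *)
Section SphereIsometry.
Variable R : rcfType.
Variables n n' : nat.
Variable f : 'rV[R]_n -> 'rV[R]_n'.
Hypothesis f_isom : sphere_isometry f.

Lemma isom_sphere x : on_sphere x -> on_sphere (f x).
Proof. by case: f_isom => sph _ _; apply: sph. Qed.

Lemma isom_dotv x y : on_sphere x -> on_sphere y -> dotv (f x) (f y) = dotv x y.
Proof.
move=> hx hy; case: f_isom => sph dist _; have := dist _ _ hx hy.
have := sph _ hx; have := sph _ hy; rewrite /on_sphere.
rewrite !dotvBl !dotvBr [dotv (f y) (f x)]dotvC [dotv y x]dotvC.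
by move: hx hy; rewrite /on_sphere; lra.
Qed.

Lemma isom_inj x y : on_sphere x -> on_sphere y -> f x = f y -> x = y.
Proof.
move=> hx hy fxy; apply/eqP; rewrite -subr_eq0; apply/eqP/dotv_eq0.
by case: f_isom => _ dist _; rewrite -dist // fxy subrr dotv0l.
Qed.

Lemma dotv_delta p (a : 'I_p) (w : 'rV[R]_p) : dotv (delta_mx 0 a) w = w 0 a.
Proof. by rewrite /dotv -rowE !mxE. Qed.

Lemma sphere_delta p (a : 'I_p) : on_sphere (delta_mx 0 a : 'rV[R]_p).
Proof. by rewrite /on_sphere dotv_delta mxE !eqxx. Qed.

Definition isom_mx : 'M[R]_(n, n') := \matrix_(a, b) (f (delta_mx 0 a)) 0 b.

Lemma row_isom_mx a : row a isom_mx = f (delta_mx 0 a).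
Proof. by apply/rowP => b; rewrite !mxE. Qed.

(* The b-th coordinate of f x - x A is its inner product with the unit
   vector e_b = f w, which vanishes since f preserves inner products. *)
Lemma isom_linear x : on_sphere x -> f x = x *m isom_mx.
Proof.
move=> hx; apply/eqP; rewrite -subr_eq0; apply/eqP/rowP => b.
case: f_isom => _ _ onto; have [w hw fw] := onto _ (sphere_delta b).
rewrite [RHS]mxE -(dotv_delta b) dotvC -fw dotvBl isom_dotv // mulmx_sum_row dotv_suml.
rewrite [dotv x w]dotvE [X in _ - X](eq_bigr (fun a => x 0 a * w 0 a)) ?subrr //.
move=> a _; rewrite dotvZl row_isom_mx isom_dotv //; last exact: sphere_delta.
by rewrite dotv_delta.
Qed.

Lemma isom_mx_orth : isom_mx *m isom_mx^T = 1%:M.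
Proof.
apply/matrixP => a b; rewrite !mxE.
have := isom_dotv (sphere_delta a) (sphere_delta b).
rewrite dotv_delta mxE eqxx /= => <-.
by rewrite dotvE; apply: eq_bigr => t _; rewrite !mxE.
Qed.

(* A has orthonormal rows (n <= n') and its row space contains every unit
   vector of R^{n'} (n' <= n). *)
Lemma isom_dim : n = n'.
Proof.
apply/eqP; rewrite eqn_leq; apply/andP; split.
  by rewrite -{1}(mxrank1 R n) -isom_mx_orth (leq_trans (mxrankM_maxl _ _)) // rank_leq_col.
rewrite -{1}(mxrank1 R n') (leq_trans _ (rank_leq_row isom_mx)) // mxrankS //.
apply/row_subP => b; case: f_isom => _ _ onto; have [w hw fw] := onto _ (sphere_delta b).
by rewrite rowE mulmx1 -fw isom_linear // submxMl.
Qed.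

End SphereIsometry.

Section Conjugation.
Variable R : rcfType.
Variables n k : nat.
Variable A : 'M[R]_n.
Hypothesis AtA : A^T *m A = 1%:M.

Definition conj_system (Q : 'I_k.+1 -> 'M[R]_n) (j : 'I_k.+1) : 'M[R]_n :=
  A *m Q j *m A^T.

Lemma conj_mul (M N : 'M[R]_n) : A *m M *m A^T *m (A *m N *m A^T) = A *m (M *m N) *m A^T.
Proof. by rewrite -!mulmxA (mulmxA A^T) AtA mul1mx !mulmxA. Qed.

Lemma conj_clifford_basis Q : is_clifford_basis Q -> is_clifford_basis (conj_system Q).
Proof.
move=> HQ; split => [j | j | a b ab]; rewrite /conj_system.
- by rewrite !trmx_mul trmxK (cliff_sym HQ) mulmxA.
- by rewrite conj_mul (cliff_sq HQ) mulmx1 (mulmx1C AtA).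
- by rewrite !conj_mul (cliff_anti HQ ab) mulmxN mulNmx.
Qed.

Lemma quad_conj (M : 'M[R]_n) x : quad (A *m M *m A^T) x = quad M (x *m A).
Proof. by rewrite /quad !mulmxA dotvMl trmxK. Qed.

End Conjugation.

Lemma cliff_comb_conj (R : rcfType) n m (X : 'I_m.+1 -> 'M[R]_n) (B C : 'M[R]_n) d :
  cliff_comb (fun i => B *m X i *m C) d = B *m cliff_comb X d *m C.
Proof.
rewrite /cliff_comb mulmx_sumr mulmx_suml; apply: eq_bigr => i _.
by rewrite -scalemxAr -scalemxAl.
Qed.

Lemma row_cliff_space (R : rcfType) n m (X : 'I_m.+1 -> 'M[R]_n) i :
  row i (cliff_space X) = mxvec (X i).
Proof. by apply/rowP => b; rewrite !mxE. Qed.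

Lemma comb_in_cliff_space (R : rcfType) n m (X : 'I_m.+1 -> 'M[R]_n) d :
  (mxvec (cliff_comb X d) <= cliff_space X)%MS.
Proof.
rewrite /cliff_comb linear_sum; apply: summx_sub => i _; rewrite linearZ.
by apply: scalemx_sub; have := row_sub i (cliff_space X); rewrite row_cliff_space.
Qed.

Lemma same_fibers_of_isometry (R : rcfType) n m m' (P : 'I_m.+1 -> 'M[R]_n)
    (P' : 'I_m'.+1 -> 'M[R]_n) (f : 'rV[R]_n -> 'rV[R]_n) :
  (0 < n)%N -> is_clifford_basis P -> is_clifford_basis P' ->
  sphere_isometry f -> maps_leaves_onto P P' f ->
  same_fibers P (conj_system (isom_mx f) P').
Proof.
move=> n0 HP HP' f_isom leaves x y nx ny.
have qconj j z : on_sphere z ->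
    quad (conj_system (isom_mx f) P' j) z = quad (P' j) (f z).
  by move=> hz; rewrite quad_conj isom_linear.
split => same.
- have pi_yx : cliff_pi P y = cliff_pi P x.
    by apply/(cliff_pi_eqE HP n0) => i; rewrite same.
  have [_ pi_fyx] := (leaves x nx (f y)).2 (ex_intro2 _ _ y (conj ny pi_yx) erefl).
  by move/(cliff_pi_eqE HP' n0): pi_fyx => pi_fyx j; rewrite !qconj // pi_fyx.
- have pi_fyx : cliff_pi P' (f y) = cliff_pi P' (f x).
    by apply/(cliff_pi_eqE HP' n0) => j; rewrite -!qconj // same.
  have [y' [ny' pi_y'x] fy'] := (leaves x nx (f y)).1 (conj (isom_sphere f_isom ny) pi_fyx).
  rewrite -(isom_inj f_isom ny' ny fy').
  by move/(cliff_pi_eqE HP n0): pi_y'x => q_y'x i; rewrite q_y'x.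
Qed.

Lemma geom_equiv_of_spans (R : rcfType) l m m' (P : 'I_m.+1 -> 'M[R]_(l.*2))
    (P' : 'I_m'.+1 -> 'M[R]_(l.*2)) (A : 'M[R]_(l.*2)) :
  A *m A^T = 1%:M ->
  (forall i, exists c, P i = cliff_comb (conj_system A P') c) ->
  (forall j, exists d, conj_system A P' j = cliff_comb P d) ->
  geom_equiv P P'.
Proof.
move=> AAt spanP spanP'; have AtA : A^T *m A = 1%:M := mulmx1C AAt.
have invA : invmx A = A^T.
  have A_unit : A \in unitmx by case: (mulmx1_unit AAt).
  by rewrite -[invmx A]mulmx1 -AAt mulmxA mulVmx ?mul1mx.
have conj_cancel M : A^T *m (A *m M *m A^T) *m A = M.
  by rewrite !mulmxA AtA mul1mx -mulmxA AtA mulmx1.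
exists erefl; exists A => //; rewrite invA.
apply/andP; split; apply/row_subP => j; rewrite row_cliff_space.
- have [d Pd] := spanP' j.
  rewrite -(conj_cancel (P' j)) -[A *m P' j *m A^T]/(conj_system A P' j) Pd.
  by rewrite -cliff_comb_conj; exact: comb_in_cliff_space.
- have [c Pc] := spanP j.
  rewrite castmx_id Pc /conj_system cliff_comb_conj conj_cancel.
  exact: comb_in_cliff_space.
Qed.

Unset Implicit Arguments.

Theorem proposition4p2 (R : rcfType) (l m l' m' : nat)
  (P : 'I_m.+1 -> 'M[R]_(l.*2)) (P' : 'I_m'.+1 -> 'M[R]_(l'.*2)) :
  (0 < m)%N -> (0 < m')%N ->
  is_clifford_basis P -> is_clifford_basis P' ->
  ((m.+1 < l)%N \/ (l = m /\ (2 <= m)%N)) ->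
  ((m'.+1 < l')%N \/ (l' = m' /\ (2 <= m')%N)) ->
  ~ geom_equiv P P' ->
  ~ (exists f : 'rV[R]_(l.*2) -> 'rV[R]_(l'.*2),
       sphere_isometry f /\ maps_leaves_onto P P' f).
Proof.
move=> m0 m0' HP HP' hl hl' not_equiv [f [f_isom f_leaves]].
have l'l : l' = l by apply/double_inj; rewrite -(isom_dim f_isom).
subst l'; apply: not_equiv.
have l0 : (0 < l)%N by case: hl => [|[->]]; lia.
have n0 : (0 < l.*2)%N by rewrite double_gt0.
have AAt := isom_mx_orth f_isom.
have HQ := conj_clifford_basis (mulmx1C AAt) HP'.
have fibers := same_fibers_of_isometry n0 HP HP' f_isom f_leaves.
apply: (geom_equiv_of_spans AAt).
- by apply: (span_of_same_fibers HP HQ m0 l0 _ fibers); case: hl' => [|[]]; lia.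
- apply: (span_of_same_fibers HQ HP m0' l0 _ (same_fibers_sym fibers)).
  by case: hl => [|[]]; lia.
Qed.
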